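(* Let $H_1,H_2$ be complex Hilbert spaces. The set of densely defined closed minimum attaining operators from $H_1$ to $H_2$ is dense, with respect to the gap topology, in the set of all densely defined closed operators from $H_1$ to $H_2$.
   Context: Hilbert spaces are complex and infinite dimensional. For a densely defined closed operator $A$ with domain $D(A)$, $m(A)=\inf\{\|Ax\|: x\in D(A),\ \|x\|=1\}$, and $A$ is minimum attaining if there exists $x_0\in D(A)$, $\|x_0\|=1$, with $\|Ax_0\|=m(A)$. The gap topology is the topology induced by the metric $\theta(A,B)=\|P_{G(A)}-P_{G(B)}\|$, where $G(A)=\{(Ax,x):x\in D(A)\}$ is the (closed) graph and $P_M$ the orthogonal projection onto $M$. *)

From HB Require Import structures.
From mathcomp Require Import all_boot all_order all_algebra.
From mathcomp Require Import boolp classical_sets reals.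
From mathcomp Require Import complex.
From Stdlib Require Import ClassicalEpsilon.
Set Implicit Arguments. Unset Strict Implicit. Unset Printing Implicit Defensive.
Import Order.TTheory GRing.Theory Num.Theory.
Local Open Scope ring_scope.
Local Open Scope classical_set_scope.

Section Hilbert.
Variable R : realType.
Local Notation C := (R[i]).

Definition is_inner_product (V : lmodType C) (ip : V -> V -> C) : Prop :=
  [/\ (forall (a : C) (x y z : V), ip (a *: x + y) z = a * ip x z + ip y z),
      (forall x y : V, ip y x = conjc (ip x y)),
      (forall x : V, 0 <= ip x x) &
      (forall x : V, ip x x = 0 -> x = 0)].

Definition ipnorm (V : lmodType C) (ip : V -> V -> C) (x : V) : R :=
  Num.sqrt (@complex.Re R (ip x x)).

Definition cauchy_seq (V : lmodType C) (ip : V -> V -> C) (u : nat -> V) : Prop :=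
  forall eps : R, 0 < eps -> exists N : nat, forall m n : nat,
    (N <= m)%N -> (N <= n)%N -> ipnorm ip (u m - u n) < eps.

Definition converges_to (V : lmodType C) (ip : V -> V -> C) (u : nat -> V) (l : V) : Prop :=
  forall eps : R, 0 < eps -> exists N : nat, forall n : nat,
    (N <= n)%N -> ipnorm ip (u n - l) < eps.

Definition infinite_dimensional (V : lmodType C) (ip : V -> V -> C) : Prop :=
  forall n : nat, exists e : nat -> V, forall i j : nat, (i < n)%N -> (j < n)%N ->
    ip (e i) (e j) = (i == j)%:R.

Definition is_hilbert (V : lmodType C) (ip : V -> V -> C) : Prop :=
  [/\ is_inner_product ip,
      (forall u : nat -> V, cauchy_seq ip u -> exists l, converges_to ip u l) &
      infinite_dimensional ip].

(** Operators from V1 to V2: a domain and a map (only its values on the domain matter). *)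
Record op (V1 V2 : lmodType C) := Op { dom : set V1; app : V1 -> V2 }.

Definition linear_op (V1 V2 : lmodType C) (A : op V1 V2) : Prop :=
  [/\ dom A 0,
      (forall (a : C) x y, dom A x -> dom A y -> dom A (a *: x + y)) &
      (forall (a : C) x y, dom A x -> dom A y ->
         app A (a *: x + y) = a *: app A x + app A y)].

Definition densely_defined (V1 V2 : lmodType C) (ip1 : V1 -> V1 -> C) (A : op V1 V2) : Prop :=
  linear_op A /\
  forall (x : V1) (eps : R), 0 < eps -> exists d, dom A d /\ ipnorm ip1 (x - d) < eps.

Definition closed_op (V1 V2 : lmodType C) (ip1 : V1 -> V1 -> C) (ip2 : V2 -> V2 -> C)
  (A : op V1 V2) : Prop :=
  forall (u : nat -> V1) (x : V1) (y : V2),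
    (forall n, dom A (u n)) -> converges_to ip1 u x -> converges_to ip2 (app A \o u) y ->
    dom A x /\ app A x = y.

Definition min_modulus (V1 V2 : lmodType C) (ip1 : V1 -> V1 -> C) (ip2 : V2 -> V2 -> C)
  (A : op V1 V2) : R :=
  inf [set r | exists x, dom A x /\ ipnorm ip1 x = 1 /\ r = ipnorm ip2 (app A x)].

Definition minimum_attaining (V1 V2 : lmodType C) (ip1 : V1 -> V1 -> C) (ip2 : V2 -> V2 -> C)
  (A : op V1 V2) : Prop :=
  exists x0, dom A x0 /\ ipnorm ip1 x0 = 1 /\ ipnorm ip2 (app A x0) = min_modulus ip1 ip2 A.

Definition ipsum (V1 V2 : lmodType C) (ip1 : V1 -> V1 -> C) (ip2 : V2 -> V2 -> C)
  (z w : V2 * V1) : C := ip2 z.1 w.1 + ip1 z.2 w.2.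

Definition graph (V1 V2 : lmodType C) (A : op V1 V2) : set (V2 * V1) :=
  [set z | exists x, dom A x /\ z = (app A x, x)].

Definition is_orth_proj (W : lmodType C) (ip : W -> W -> C) (M : set W) (P : W -> W) : Prop :=
  forall z, M (P z) /\ forall w, M w -> ip (z - P z) w = 0.

Definition orth_proj (W : lmodType C) (ip : W -> W -> C) (M : set W) : W -> W :=
  epsilon (inhabits id) (is_orth_proj ip M).

Definition gap (V1 V2 : lmodType C) (ip1 : V1 -> V1 -> C) (ip2 : V2 -> V2 -> C)
  (A B : op V1 V2) : R :=
  let ip := ipsum ip1 ip2 in
  let PA := orth_proj ip (graph A) in
  let PB := orth_proj ip (graph B) in
  sup [set r | exists z, ipnorm ip z <= 1 /\ r = ipnorm ip (PA z - PB z)].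

End Hilbert.

From HB Require Import structures.
From mathcomp Require Import all_boot all_order all_algebra.
From mathcomp Require Import boolp classical_sets reals.
From mathcomp Require Import complex.
From mathcomp Require Import ring lra.
From Stdlib Require Import ClassicalEpsilon.
Set Implicit Arguments. Unset Strict Implicit. Unset Printing Implicit Defensive.
Import Order.TTheory GRing.Theory Num.Theory.
Local Open Scope ring_scope.
Local Open Scope complex_scope.
Local Open Scope classical_set_scope.

(* Let [m = m(A)] and let [x0] be a unit vector of [D(A)] with [|A x0|] close
   to [m].  For any [y0], the rank-one perturbation
   [B x = A x + <x, x0> (y0 - A x0)] is densely defined and closed, sends [x0]
   to [y0], and [theta(A, B) <= 2 |y0 - A x0|], since each graph lies within
   relative distance [|y0 - A x0|] of the other.  [B] attains its minimum
   modulus at [x0] as soon as [y0] is orthogonal to [W = A({x0}^perp)] and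
   [|y0| <= m].  If [m] is small, [y0 = 0] will do.  Otherwise [A] is bounded
   below, so [W] is closed, and [y0 = (m / |A x0|) (A x0 - P_W (A x0))] works:
   minimality of [m] along the lines [x0 + t x'], where [A x' = P_W (A x0)],
   gives [|P_W (A x0)|^2 <= |A x0|^2 - m^2], so [y0] is close to [A x0]. *)

Section RealFacts.
Variable R : realType.
Local Notation Re := (@complex.Re R).
Local Notation Im := (@complex.Im R).
Implicit Types (a b c d x : R) (z w : R[i]).

Lemma ReM z w : Re (z * w) = Re z * Re w - Im z * Im w.
Proof. by case: z => ? ?; case: w => ? ?; reflexivity. Qed.
Lemma ImM z w : Im (z * w) = Re z * Im w + Im z * Re w.
Proof. by case: z => ? ?; case: w => ? ?; reflexivity. Qed.
Lemma ReJ z : Re z^* = Re z. Proof. by case: z => ? ?; reflexivity. Qed.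
Lemma ImJ z : Im z^* = - Im z. Proof. by case: z => ? ?; reflexivity. Qed.

Lemma complex_ext z w : Re z = Re w -> Im z = Im w -> z = w.
Proof. by case: z; case: w => /= ? ? ? ? -> ->. Qed.

Lemma ge0c_real z : 0 <= z -> z = (Re z)%:C.
Proof. by case: z => a b; rewrite lecE /= => /andP[/eqP -> _]. Qed.

Lemma ge0c_Re z : 0 <= z -> 0 <= Re z.
Proof. by rewrite lecE => /andP[]. Qed.

Lemma le_of_sqr_le a b : 0 <= a -> 0 <= b -> a ^+ 2 <= b ^+ 2 -> a <= b.
Proof. by move=> a0 b0; rewrite ler_sqr. Qed.

Lemma lt_of_sqr_lt a b : 0 <= a -> 0 <= b -> a ^+ 2 < b ^+ 2 -> a < b.
Proof. by move=> a0 b0; rewrite ltr_sqr. Qed.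

Lemma le_of_le_addr a b : (forall e, 0 < e -> a < b + e) -> a <= b.
Proof.
move=> h; rewrite leNgt; apply/negP => ba.
by have := h (a - b); rewrite subr_gt0 addrC subrK ltxx => /(_ ba).
Qed.

Lemma quadratic_ge0_discr a b c : 0 <= c ->
  (forall t, 0 <= a + 2 * t * b + t ^+ 2 * c) -> b ^+ 2 <= a * c.
Proof.
move=> c0 H.
have [c_gt0|] := ltrP 0 c.
  have := H (- b / c); set t := - b / c => h.
  have ht : t * c = - b by rewrite /t divfK ?gt_eqF.
  have : 0 <= a * c + 2 * (t * c) * b + (t * c) ^+ 2.
    have -> : a * c + 2 * (t * c) * b + (t * c) ^+ 2 = (a + 2 * t * b + t ^+ 2 * c) * c.
      by ring.
    by rewrite mulr_ge0 // ltW.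
  by rewrite ht; nra.
move=> cle0; have c_eq0 : c = 0 by apply/eqP; rewrite eq_le cle0 c0.
subst c; rewrite mulr0; have [->|bn0] := eqVneq b 0; first by rewrite expr0n.
have := H (- (a + 1) / (2 * b)).
have -> : a + 2 * (- (a + 1) / (2 * b)) * b + (- (a + 1) / (2 * b)) ^+ 2 * 0 = -1.
  by field.
by rewrite ler0N1.
Qed.

Lemma invSn_lt_eventually x : 0 < x ->
  exists N, forall n, (N <= n)%N -> n.+1%:R^-1 < x.
Proof.
move=> x0; exists (Num.Def.archi_bound x^-1) => n hn.
have lt_xVn : x^-1 < n.+1%:R.
  apply: lt_le_trans (archi_boundP _) _; first by rewrite invr_ge0 ltW.
  by rewrite ler_nat; apply: leq_trans hn _.
by rewrite -(invrK x) ltf_pV2 ?posrE ?invr_gt0.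
Qed.

Lemma sqr_sub_sqr_lt a b d e : 0 <= a -> a <= b -> b < a + d -> d <= e ->
  d * (2 * a + e) <= e ^+ 2 -> b ^+ 2 - a ^+ 2 < e ^+ 2.
Proof.
move=> a0 ab bd de dae; have d0 : 0 < d by lra.
have h1 : (b - a) * (b + a) <= d * (b + a) by rewrite ler_wpM2r; lra.
have h2 : d * (b + a) < d * (2 * a + e) by rewrite ltr_pM2l //; lra.
nra.
Qed.

End RealFacts.

Section InnerProduct.
Variable R : realType.
Local Notation Re := (@complex.Re R).
Local Notation Im := (@complex.Im R).
Variables (V : lmodType R[i]) (ip : V -> V -> R[i]).
Hypothesis Hip : is_inner_product ip.
Implicit Types (x y z : V).

Lemma ipDZl (a : R[i]) x y z : ip (a *: x + y) z = a * ip x z + ip y z.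
Proof. by case: Hip => h _ _ _; apply: h. Qed.
Lemma ipC x y : ip y x = (ip x y)^*. Proof. by case: Hip => _ h _ _; apply: h. Qed.
Lemma ip_ge0 x : 0 <= ip x x. Proof. by case: Hip => _ _ h _; apply: h. Qed.
Lemma ip_eq0 x : ip x x = 0 -> x = 0. Proof. by case: Hip => _ _ _ h; apply: h. Qed.

Lemma ip0l z : ip 0 z = 0.
Proof.
have := ipDZl 1 0 0 z; rewrite scaler0 addr0 mul1r => h.
by apply: (@addrI _ (ip 0 z)); rewrite addr0 -h.
Qed.
Lemma ipDl x y z : ip (x + y) z = ip x z + ip y z.
Proof. by rewrite -[x in LHS]scale1r ipDZl mul1r. Qed.
Lemma ipZl (a : R[i]) x z : ip (a *: x) z = a * ip x z.
Proof. by rewrite -[a *: x]addr0 ipDZl ip0l addr0. Qed.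
Lemma ipNl x z : ip (- x) z = - ip x z.
Proof. by rewrite -scaleN1r ipZl mulN1r. Qed.
Lemma ipBl x y z : ip (x - y) z = ip x z - ip y z.
Proof. by rewrite ipDl ipNl. Qed.
Lemma ipDr x y z : ip z (x + y) = ip z x + ip z y.
Proof. by rewrite (ipC (x + y)) (ipC x) (ipC y) ipDl rmorphD. Qed.
Lemma ipZr (a : R[i]) x z : ip z (a *: x) = a^* * ip z x.
Proof. by rewrite (ipC (a *: x)) (ipC x) ipZl rmorphM. Qed.
Lemma ipNr x z : ip z (- x) = - ip z x.
Proof. by rewrite (ipC (- x)) (ipC x) ipNl rmorphN. Qed.
Lemma ipBr x y z : ip z (x - y) = ip z x - ip z y.
Proof. by rewrite ipDr ipNr. Qed.

Definition sqnorm x := Re (ip x x).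

Lemma ip_sqnorm x : ip x x = (sqnorm x)%:C.
Proof. exact/ge0c_real/ip_ge0. Qed.
Lemma sqnorm_ge0 x : 0 <= sqnorm x. Proof. exact/ge0c_Re/ip_ge0. Qed.
Lemma Re_ipC x y : Re (ip y x) = Re (ip x y). Proof. by rewrite ipC ReJ. Qed.
Lemma sqnormD x y : sqnorm (x + y) = sqnorm x + sqnorm y + 2 * Re (ip x y).
Proof. rewrite /sqnorm ipDl !ipDr !raddfD /= (Re_ipC x y); ring. Qed.
Lemma sqnormB x y : sqnorm (x - y) = sqnorm x + sqnorm y - 2 * Re (ip x y).
Proof. rewrite /sqnorm ipBl !ipBr !raddfB /= (Re_ipC x y); ring. Qed.
Lemma sqnormZ (a : R[i]) x : sqnorm (a *: x) = (Re a ^+ 2 + Im a ^+ 2) * sqnorm x.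
Proof. rewrite /sqnorm ipZl ipZr ip_sqnorm !ReM ImM ReJ ImJ /=; ring. Qed.
Lemma sqnormN x : sqnorm (- x) = sqnorm x.
Proof. by rewrite -scaleN1r sqnormZ /=; ring. Qed.
Lemma sqnormZ_real (t : R) x : sqnorm (t%:C *: x) = t ^+ 2 * sqnorm x.
Proof. by rewrite sqnormZ /= expr0n addr0. Qed.
Lemma Re_ipZr_real (t : R) x y : Re (ip x (t%:C *: y)) = t * Re (ip x y).
Proof. rewrite ipZr ReM ReJ ImJ /=; ring. Qed.

Lemma Re_ip_sqr_le x y : Re (ip x y) ^+ 2 <= sqnorm x * sqnorm y.
Proof.
apply: quadratic_ge0_discr; first exact: sqnorm_ge0.
move=> t; have := sqnorm_ge0 (x + t%:C *: y).
by rewrite sqnormD sqnormZ_real Re_ipZr_real; lra.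
Qed.

(* Apply the real-part inequality to [x] and [ip x y *: y]. *)
Lemma cauchy_schwarz x y :
  Re (ip x y) ^+ 2 + Im (ip x y) ^+ 2 <= sqnorm x * sqnorm y.
Proof.
set z := ip x y; set s := Re z ^+ 2 + Im z ^+ 2.
have s0 : 0 <= s by rewrite /s addr_ge0 // sqr_ge0.
have := Re_ip_sqr_le x (z *: y).
have -> : Re (ip x (z *: y)) = s by rewrite ipZr ReM ReJ ImJ /s -/z; ring.
rewrite sqnormZ -/s.
have [->|sn0] := eqVneq s 0; first by rewrite mulr_ge0 ?sqnorm_ge0.
have sp : 0 < s by rewrite lt_def sn0 s0.
move=> h; have : s * s <= s * (sqnorm x * sqnorm y) by rewrite -expr2; lra.
by rewrite ler_pM2l.
Qed.

Local Notation nr := (ipnorm ip).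

Lemma ipnorm_ge0 x : 0 <= nr x. Proof. exact: sqrtr_ge0. Qed.
Lemma sqr_ipnorm x : nr x ^+ 2 = sqnorm x. Proof. by rewrite sqr_sqrtr // sqnorm_ge0. Qed.
Lemma ipnorm0 : nr 0 = 0. Proof. by rewrite /ipnorm ip0l sqrtr0. Qed.

Lemma Re_ip_le x y : Re (ip x y) <= nr x * nr y.
Proof.
apply: le_trans (ler_norm _) _.
apply: le_of_sqr_le; rewrite ?mulr_ge0 ?ipnorm_ge0 //.
by rewrite real_normK ?num_real // exprMn !sqr_ipnorm Re_ip_sqr_le.
Qed.
Lemma modulus_ip_le x y : Num.sqrt (Re (ip x y) ^+ 2 + Im (ip x y) ^+ 2) <= nr x * nr y.
Proof.
apply: le_of_sqr_le; rewrite ?sqrtr_ge0 ?mulr_ge0 ?ipnorm_ge0 //.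
by rewrite sqr_sqrtr ?addr_ge0 ?sqr_ge0 // exprMn !sqr_ipnorm cauchy_schwarz.
Qed.

Lemma ipnormD x y : nr (x + y) <= nr x + nr y.
Proof.
apply: le_of_sqr_le; rewrite ?addr_ge0 ?ipnorm_ge0 //.
by rewrite sqr_ipnorm sqnormD -!sqr_ipnorm; have := Re_ip_le x y; lra.
Qed.
Lemma ipnormN x : nr (- x) = nr x. Proof. by rewrite /ipnorm -/(sqnorm _) sqnormN. Qed.
Lemma ipnormZ (a : R[i]) x : nr (a *: x) = Num.sqrt (Re a ^+ 2 + Im a ^+ 2) * nr x.
Proof. by rewrite /ipnorm -!/(sqnorm _) sqnormZ sqrtrM // addr_ge0 ?sqr_ge0. Qed.
Lemma ipnormZ_real (t : R) x : 0 <= t -> nr (t%:C *: x) = t * nr x.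
Proof. by move=> t0; rewrite /ipnorm -!/(sqnorm _) sqnormZ_real sqrtrM ?sqr_ge0 // sqrtr_sqr ger0_norm. Qed.
Lemma ipnormB_le x y : nr (x - y) <= nr x + nr y.
Proof. by apply: le_trans (ipnormD _ _) _; rewrite ipnormN. Qed.
Lemma ipnormB_tri x y z : nr (x - z) <= nr (x - y) + nr (y - z).
Proof. by apply: le_trans (ipnormD _ _); rewrite addrA subrK. Qed.
Lemma ipnormBC x y : nr (x - y) = nr (y - x). Proof. by rewrite -ipnormN opprB. Qed.

Lemma ipnorm_scale_sub_le (s : R) x y : 0 <= s -> s <= 1 ->
  nr (s%:C *: (x - y) - x) <= nr y + (1 - s) * nr x.
Proof.
move=> s0 s1; apply: le_trans (ipnormB_tri _ (s%:C *: x) _) _; apply: lerD.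
  rewrite scalerBr addrAC subrr add0r ipnormN ipnormZ_real //.
  by rewrite ler_piMl ?ipnorm_ge0.
rewrite -opprB -{1}[x]scale1r -scalerBl -rmorphB ipnormN ipnormZ_real //.
by rewrite subr_ge0.
Qed.

End InnerProduct.

Section Convergence.
Variable R : realType.
Local Notation Re := (@complex.Re R).
Local Notation Im := (@complex.Im R).
Variables (V : lmodType R[i]) (ip : V -> V -> R[i]).
Local Notation nr := (ipnorm ip).

Lemma cvg_ext (u w : nat -> V) l :
  (forall n, u n = w n) -> converges_to ip u l -> converges_to ip w l.
Proof. by move=> e h eps /h[N hN]; exists N => n /hN; rewrite e. Qed.

Hypothesis Hip : is_inner_product ip.

Lemma cvg_cauchy u l : converges_to ip u l -> cauchy_seq ip u.
Proof.
move=> h e e0; have [N hN] := h (e / 2) (divr_gt0 e0 (ltr0Sn _ 1)).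
exists N => m n hm hn; apply: le_lt_trans (ipnormB_tri Hip _ l _) _.
by rewrite (ipnormBC Hip l); have := hN _ hm; have := hN _ hn; lra.
Qed.

Lemma cvgD u w x y : converges_to ip u x -> converges_to ip w y ->
  converges_to ip (fun n => u n + w n) (x + y).
Proof.
move=> hu hw e e0; have [N1 h1] := hu (e / 2) (divr_gt0 e0 (ltr0Sn _ 1)).
have [N2 h2] := hw (e / 2) (divr_gt0 e0 (ltr0Sn _ 1)).
exists (maxn N1 N2) => n hn.
have := h1 n (leq_trans (leq_maxl _ _) hn); have := h2 n (leq_trans (leq_maxr _ _) hn).
rewrite opprD addrACA; have := ipnormD Hip (u n - x) (w n - y); lra.
Qed.

Lemma cvgN u x : converges_to ip u x -> converges_to ip (fun n => - u n) (- x).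
Proof. by move=> hu e /hu[N h]; exists N => n /h; rewrite -opprD ipnormN. Qed.

Lemma cvgB u w x y : converges_to ip u x -> converges_to ip w y ->
  converges_to ip (fun n => u n - w n) (x - y).
Proof. by move=> hu hw; apply: cvgD hu (cvgN hw). Qed.

Lemma cvg_ip_eq0 u x e : converges_to ip u x -> (forall n, ip (u n) e = 0) -> ip x e = 0.
Proof.
move=> hu h0; set s := Re (ip x e) ^+ 2 + Im (ip x e) ^+ 2.
have s_small eps : 0 < eps -> Num.sqrt s < eps.
  move=> eps0; rewrite /s; pose k := nr e + 1.
  have ek : nr e < k by rewrite /k ltrDl.
  have k0 : 0 < k by apply: le_lt_trans ek; apply: ipnorm_ge0.
  have [N /(_ N (leqnn N)) hN] := hu (eps / k) (divr_gt0 eps0 k0).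
  have -> : ip x e = - ip (u N - x) e by rewrite ipBl // h0 sub0r opprK.
  rewrite raddfN [Im _]raddfN /= !sqrrN; apply: le_lt_trans (modulus_ip_le Hip _ _) _.
  have h1 : nr (u N - x) * nr e <= eps / k * nr e by rewrite ler_wpM2r ?ipnorm_ge0 ?ltW.
  have h2 : eps / k * nr e < eps / k * k by rewrite ltr_pM2l ?divr_gt0.
  by rewrite divfK ?gt_eqF // in h2; apply: le_lt_trans h2.
have s_le0 : s <= 0.
  rewrite leNgt; apply/negP => s_gt0.
  by have := s_small (Num.sqrt s); rewrite sqrtr_gt0 s_gt0 ltxx => /(_ isT).
by move: s_le0; rewrite /s => ?; apply: complex_ext => /=; nra.
Qed.

End Convergence.

Definition subspace (R : realType) (V : lmodType R[i]) (M : set V) :=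
  M 0 /\ (forall a x y, M x -> M y -> M (a *: x + y)).

Definition seq_closed (R : realType) (V : lmodType R[i]) (ip : V -> V -> R[i]) (M : set V) :=
  forall u x, (forall n, M (u n)) -> converges_to ip u x -> M x.

Section Subspace.
Variables (R : realType) (V : lmodType R[i]) (M : set V).
Hypothesis HM : subspace M.
Implicit Types (x y : V).

Lemma subspace0 : M 0. Proof. by case: HM. Qed.
Lemma subspaceD x y : M x -> M y -> M (x + y).
Proof. by case: HM => _ h hx hy; rewrite -[x]scale1r; apply: h. Qed.
Lemma subspaceZ a x : M x -> M (a *: x).
Proof. by case: HM => h0 h hx; rewrite -[_ *: _]addr0; apply: h. Qed.
Lemma subspaceB x y : M x -> M y -> M (x - y).
Proof. by move=> hx hy; rewrite -scaleN1r; apply: subspaceD hx (subspaceZ _ hy). Qed.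

End Subspace.

Section NearestPoint.
Variable R : realType.
Local Notation Re := (@complex.Re R).
Local Notation Im := (@complex.Im R).
Variables (V : lmodType R[i]) (ip : V -> V -> R[i]).
Hypothesis Hip : is_inner_product ip.
Local Notation nr := (ipnorm ip).
Local Notation sqnorm := (sqnorm ip).
Variable M : set V.
Hypothesis HM : subspace M.
Implicit Types (x y z : V).

(* The parallelogram law applied to [z - m1] and [z - m2], whose half-sum is
   [z] minus the midpoint of [m1] and [m2]. *)
Lemma sqnormB_near z d m1 m2 : (forall m, M m -> d <= nr (z - m)) -> 0 <= d ->
  M m1 -> M m2 ->
  sqnorm (m1 - m2) <= 2 * sqnorm (z - m1) + 2 * sqnorm (z - m2) - 4 * d ^+ 2.
Proof.
move=> dle d0 hm1 hm2.
set a := z - m1; set b := z - m2.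
set mid := (2^-1 : R)%:C *: (m1 + m2).
have hab : a + b = (2 : R)%:C *: (z - mid).
  rewrite /a /b /mid scalerBr scalerA -rmorphM divff ?pnatr_eq0 // rmorph1 scale1r.
  by rewrite rmorph_nat scaler_nat mulr2n opprD addrACA.
have par : sqnorm (a - b) + sqnorm (a + b) = 2 * sqnorm a + 2 * sqnorm b.
  by rewrite sqnormB // sqnormD //; ring.
have h4 : 4 * d ^+ 2 <= sqnorm (a + b).
  have hd : d <= nr (z - mid) by apply/dle/(subspaceZ HM)/(subspaceD HM).
  rewrite hab sqnormZ_real // -(sqr_ipnorm Hip).
  have : d ^+ 2 <= nr (z - mid) ^+ 2 by rewrite ler_sqr ?nnegrE ?ipnorm_ge0.
  lra.
have hba : a - b = m2 - m1 by rewrite /a /b opprB addrC addrA subrK.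
by rewrite -opprB -hba sqnormN //; lra.
Qed.

Lemma nearest_point_orth z p : M p -> (forall m, M m -> nr (z - p) <= nr (z - m)) ->
  forall w, M w -> ip (z - p) w = 0.
Proof.
move=> hp hmin.
have hRe w : M w -> Re (ip (z - p) w) = 0.
  move=> hw; suff : (- Re (ip (z - p) w)) ^+ 2 <= 0 * sqnorm w by rewrite mul0r sqrrN; nra.
  apply: quadratic_ge0_discr => [|t]; first exact: sqnorm_ge0.
  have := hmin _ (subspaceD HM hp (subspaceZ HM t%:C hw)).
  rewrite opprD addrA -(ler_sqr (ipnorm_ge0 _ _) (ipnorm_ge0 _ _)) !sqr_ipnorm //.
  by rewrite (sqnormB Hip (z - p)) sqnormZ_real // Re_ipZr_real //; lra.
move=> w hw; apply: complex_ext; first by rewrite hRe.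
by have := hRe _ (subspaceZ HM 'i hw); rewrite ipZr // ReM /=; lra.
Qed.

Lemma minimizing_seq_cauchy z d (ms : nat -> V) :
  (forall m, M m -> d <= nr (z - m)) -> 0 <= d -> (forall n, M (ms n)) ->
  (forall n, nr (z - ms n) < d + n.+1%:R^-1) -> cauchy_seq ip ms.
Proof.
move=> dle d0 hM hms eps eps0.
have sqr_near (e : R) : 0 <= e -> e <= 1 -> (d + e) ^+ 2 <= d ^+ 2 + (2 * d + 1) * e.
  move=> e0 e1; have : e * e <= e * 1 by rewrite ler_wpM2l.
  nra.
have sq_near n : sqnorm (z - ms n) <= d ^+ 2 + (2 * d + 1) * n.+1%:R^-1.
  rewrite -(sqr_ipnorm Hip); apply: le_trans (sqr_near _ _ _); rewrite ?invr_ge0 ?invf_le1 ?ler1n //.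
  by rewrite ler_sqr ?nnegrE ?addr_ge0 ?ipnorm_ge0 ?invr_ge0 // ltW.
pose k := eps ^+ 2 / (8 * d + 4).
have k0 : 0 < k by apply: divr_gt0; [exact: exprn_gt0|lra].
have hk : k * (8 * d + 4) = eps ^+ 2 by rewrite divfK // gt_eqF //; lra.
have [N hN] := invSn_lt_eventually k0.
exists N => i j hi hj.
apply: lt_of_sqr_lt; rewrite ?ipnorm_ge0 ?ltW // sqr_ipnorm //.
apply: le_lt_trans (sqnormB_near dle d0 (hM i) (hM j)) _.
have := sq_near i; have := sq_near j; have := hN i hi; have := hN j hj.
clearbody k; move: (i.+1%:R^-1 : R) (j.+1%:R^-1 : R) => ei ej; nra.
Qed.

Hypothesis complete : forall u, cauchy_seq ip u -> exists l, converges_to ip u l.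
Hypothesis HMc : seq_closed ip M.

Lemma nearest_point_exists z : exists2 p, M p & forall m, M m -> nr (z - p) <= nr (z - m).
Proof.
pose dists := [set r | exists m, M m /\ r = nr (z - m)].
have dists0 : dists (nr (z - 0)) by exists 0; split => //; exact: subspace0.
have hinf : has_inf dists.
  by split; [exists (nr (z - 0))|exists 0 => r [m [_ ->]]; exact: ipnorm_ge0].
set d := inf dists.
have d0 : 0 <= d by apply: lb_le_inf; [exists (nr (z - 0))|move=> r [m [_ ->]]; exact: ipnorm_ge0].
have dle m : M m -> d <= nr (z - m) by move=> hm; apply: (ge_inf (proj2 hinf)); exists m.
have /choice[ms hms] n : exists m, M m /\ nr (z - m) < d + n.+1%:R^-1.
  have e0 : 0 < n.+1%:R^-1 :> R by rewrite invr_gt0.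
  by have [_ [m [hm ->]] hr] := inf_adherent e0 hinf; exists m.
have [p hp] := complete (minimizing_seq_cauchy dle d0 (fun n => proj1 (hms n)) (fun n => proj2 (hms n))).
exists p => [|m hm]; first by apply: HMc hp => n; case: (hms n).
apply: le_trans (dle _ hm); apply: le_of_le_addr => e e0.
have [N1 h1] := invSn_lt_eventually (divr_gt0 e0 (ltr0Sn R 1)).
have [N2 h2] := hp (e / 2) (divr_gt0 e0 (ltr0Sn _ 1)).
have := h1 _ (leq_maxl N1 N2); have := h2 _ (leq_maxr N1 N2).
have := ipnormB_tri Hip z (ms (maxn N1 N2)) p; have := proj2 (hms (maxn N1 N2)).
move: ((maxn N1 N2).+1%:R^-1 : R) => en; lra.
Qed.

Lemma orth_proj_spec : is_orth_proj ip M (orth_proj ip M).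
Proof.
have /choice[f hf] z : exists p, M p /\ forall m, M m -> nr (z - p) <= nr (z - m).
  by have [p hp hmin] := nearest_point_exists z; exists p.
apply: epsilon_spec; exists f => z; have [hM hmin] := hf z.
by split => //; apply: nearest_point_orth.
Qed.

End NearestPoint.

Section OrthProj.
Variable R : realType.
Local Notation Re := (@complex.Re R).
Variables (V : lmodType R[i]) (ip : V -> V -> R[i]).
Hypothesis Hip : is_inner_product ip.
Local Notation nr := (ipnorm ip).
Local Notation sqnorm := (sqnorm ip).
Implicit Types (x y z : V).

Section OneProjection.
Variables (M : set V) (P : V -> V).
Hypothesis HM : subspace M.
Hypothesis HP : is_orth_proj ip M P.

Lemma orth_proj_in z : M (P z). Proof. by case: (HP z). Qed.
Lemma orth_proj_orth z w : M w -> ip (z - P z) w = 0. Proof. by case: (HP z) => _; apply. Qed.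

Lemma ip_orth_proj z w : M w -> ip (P z) w = ip z w.
Proof. by move/(orth_proj_orth z)/eqP; rewrite ipBl // subr_eq0 => /eqP. Qed.

Lemma sqnorm_orth_proj z : sqnorm (P z) = Re (ip z (P z)).
Proof. by rewrite -[LHS]/(Re (ip (P z) (P z))) ip_orth_proj //; exact: orth_proj_in. Qed.

Lemma sqnorm_orth_proj_split z : sqnorm z = sqnorm (P z) + sqnorm (z - P z).
Proof.
rewrite -[in LHS](subrKC (P z) z) (sqnormD Hip (P z)) Re_ipC //.
by rewrite (orth_proj_orth _ (orth_proj_in z)) mulr0 addr0.
Qed.

Lemma ipnorm_orth_proj_le z : nr (P z) <= nr z.
Proof.
apply: le_of_sqr_le; rewrite ?ipnorm_ge0 // !sqr_ipnorm // (sqnorm_orth_proj_split z).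
by rewrite lerDl sqnorm_ge0.
Qed.

Lemma ipnorm_orth_proj_compl_le z : nr (z - P z) <= nr z.
Proof.
apply: le_of_sqr_le; rewrite ?ipnorm_ge0 // !sqr_ipnorm // (sqnorm_orth_proj_split z).
by rewrite lerDr sqnorm_ge0.
Qed.

Lemma orth_proj_nearest z m : M m -> nr (z - P z) <= nr (z - m).
Proof.
move=> hm; apply: le_of_sqr_le; rewrite ?ipnorm_ge0 // !sqr_ipnorm //.
have -> : z - m = (z - P z) + (P z - m) by rewrite addrA subrK.
rewrite (sqnormD Hip (z - P z)).
rewrite (orth_proj_orth _ (subspaceB HM (orth_proj_in z) hm)).
by rewrite mulr0 addr0 lerDl sqnorm_ge0.
Qed.

Lemma orth_projD x y : P (x + y) = P x + P y.
Proof.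
set r := P (x + y) - (P x + P y).
have hr : M r by apply: (subspaceB HM); [|apply: (subspaceD HM)]; exact: orth_proj_in.
apply/eqP; rewrite -subr_eq0; apply/eqP; apply: (ip_eq0 Hip).
by rewrite -/r {1}/r ipBl // ipDl // !ip_orth_proj // ipDl // subrr.
Qed.

End OneProjection.

(* Split [z = P_M z + w]; then [P_M z - P_N (P_M z)] and [P_N w] are each
   bounded by [c |z|]. *)
Lemma ipnorm_orth_proj_sub_le (M N : set V) (PM PN : V -> V) (c : R) :
  subspace M -> subspace N -> is_orth_proj ip M PM -> is_orth_proj ip N PN -> 0 <= c ->
  (forall u, M u -> exists2 v, N v & nr (u - v) <= c * nr u) ->
  (forall u, N u -> exists2 v, M v & nr (u - v) <= c * nr u) ->
  forall z, nr (PM z - PN z) <= 2 * c * nr z.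
Proof.
move=> sM sN hPM hPN c0 hMN hNM z.
set w := z - PM z.
have -> : PM z - PN z = (PM z - PN (PM z)) - PN w.
  by rewrite -addrA -opprD -(orth_projD sN hPN) subrKC.
have t1 : nr (PM z - PN (PM z)) <= c * nr z.
  have [v hv hv'] := hMN _ (orth_proj_in hPM z).
  apply: le_trans (orth_proj_nearest sN hPN _ hv) _; apply: le_trans hv' _.
  by rewrite ler_wpM2l // (ipnorm_orth_proj_le hPM).
have t2 : nr (PN w) <= c * nr w.
  set s := PN w.
  have hs : nr s ^+ 2 <= nr w * (c * nr s).
    rewrite sqr_ipnorm // (sqnorm_orth_proj hPN).
    have -> : ip w s = ip w (s - PM s) + ip w (PM s) by rewrite -ipDr // subrK.
    rewrite [ip w (PM s)](orth_proj_orth hPM _ (orth_proj_in hPM s)) addr0.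
    apply: le_trans (Re_ip_le Hip _ _) _; rewrite ler_wpM2l ?ipnorm_ge0 //.
    have [u hu hu'] := hNM _ (orth_proj_in hPN w).
    exact: le_trans (orth_proj_nearest sM hPM _ hu) hu'.
  have [->|sn0] := eqVneq (nr s) 0; first by rewrite mulr_ge0 ?ipnorm_ge0.
  have sp : 0 < nr s by rewrite lt_def sn0 ipnorm_ge0.
  by rewrite -(ler_pM2l sp); rewrite expr2 in hs; lra.
have t3 : c * nr w <= c * nr z by rewrite ler_wpM2l ?(ipnorm_orth_proj_compl_le hPM).
by apply: le_trans (ipnormB_le Hip _ _) _; lra.
Qed.

End OrthProj.

Section DirectSum.
Variable R : realType.
Variables (V1 V2 : lmodType R[i]) (ip1 : V1 -> V1 -> R[i]) (ip2 : V2 -> V2 -> R[i]).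
Hypothesis H1 : is_inner_product ip1.
Hypothesis H2 : is_inner_product ip2.
Local Notation ips := (ipsum ip1 ip2).

Lemma ipsum_inner_product : is_inner_product ips.
Proof.
split.
- by move=> a x y z; rewrite /ipsum /= (ipDZl H2) (ipDZl H1) mulrDr addrACA.
- by move=> x y; rewrite /ipsum (ipC H2 x.1) (ipC H1 x.2) rmorphD.
- by move=> x; rewrite /ipsum addr_ge0 // ip_ge0.
- move=> [x2 x1]; rewrite /ipsum /= => /eqP.
  rewrite paddr_eq0 ?ip_ge0 // => /andP[/eqP h2 /eqP h1].
  by rewrite (ip_eq0 H2 h2) (ip_eq0 H1 h1).
Qed.

Lemma ipnorm_fst_le z : ipnorm ip2 z.1 <= ipnorm ips z.
Proof.
rewrite /ipnorm ler_sqrt; last exact: (sqnorm_ge0 ipsum_inner_product).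
by rewrite /ipsum raddfD lerDl; exact: (sqnorm_ge0 H1).
Qed.
Lemma ipnorm_snd_le z : ipnorm ip1 z.2 <= ipnorm ips z.
Proof.
rewrite /ipnorm ler_sqrt; last exact: (sqnorm_ge0 ipsum_inner_product).
by rewrite /ipsum raddfD lerDr; exact: (sqnorm_ge0 H2).
Qed.
Lemma ipnorm_ipsum_le z : ipnorm ips z <= ipnorm ip2 z.1 + ipnorm ip1 z.2.
Proof.
apply: le_of_sqr_le; rewrite ?addr_ge0 ?ipnorm_ge0 //.
rewrite (sqr_ipnorm ipsum_inner_product) [sqnorm _ _]raddfD /= -/(sqnorm _ _) -/(sqnorm _ _).
rewrite -(sqr_ipnorm H1) -(sqr_ipnorm H2).
by have := ipnorm_ge0 ip2 z.1; have := ipnorm_ge0 ip1 z.2; nra.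
Qed.

Lemma cvg_fst u l : converges_to ips u l -> converges_to ip2 (fun n => (u n).1) l.1.
Proof. by move=> h e /h[N hN]; exists N => n /hN; apply: le_lt_trans (ipnorm_fst_le _). Qed.
Lemma cvg_snd u l : converges_to ips u l -> converges_to ip1 (fun n => (u n).2) l.2.
Proof. by move=> h e /h[N hN]; exists N => n /hN; apply: le_lt_trans (ipnorm_snd_le _). Qed.

Lemma ipsum_complete :
  (forall u, cauchy_seq ip1 u -> exists l, converges_to ip1 u l) ->
  (forall u, cauchy_seq ip2 u -> exists l, converges_to ip2 u l) ->
  forall u, cauchy_seq ips u -> exists l, converges_to ips u l.
Proof.
move=> c1 c2 u hu.
have [l2 hl2] : exists l, converges_to ip1 (fun n => (u n).2) l.
  apply: c1 => e /hu[N hN]; exists N => m n hm hn.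
  exact: le_lt_trans (ipnorm_snd_le (u m - u n)) (hN _ _ hm hn).
have [l1 hl1] : exists l, converges_to ip2 (fun n => (u n).1) l.
  apply: c2 => e /hu[N hN]; exists N => m n hm hn.
  exact: le_lt_trans (ipnorm_fst_le (u m - u n)) (hN _ _ hm hn).
exists (l1, l2) => e e0.
have [N1 h1] := hl1 (e / 2) (divr_gt0 e0 (ltr0Sn _ 1)).
have [N2 h2] := hl2 (e / 2) (divr_gt0 e0 (ltr0Sn _ 1)).
exists (maxn N1 N2) => n hn; apply: le_lt_trans (ipnorm_ipsum_le _) _.
have a1 := h1 n (leq_trans (leq_maxl _ _) hn).
have a2 := h2 n (leq_trans (leq_maxr _ _) hn).
by rewrite /= [e]splitr ltrD.
Qed.

End DirectSum.

Section LinearOp.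
Variables (R : realType) (V1 V2 : lmodType R[i]) (A : op V1 V2).
Hypothesis lA : linear_op A.
Implicit Types (x y : V1).

Lemma app0 : app A 0 = 0.
Proof.
case: lA => d0 _ hl; have := hl 1 0 0 d0 d0; rewrite scaler0 addr0 scale1r => h.
by apply: (@addrI _ (app A 0)); rewrite addr0 -h.
Qed.
Lemma domZ (a : R[i]) x : dom A x -> dom A (a *: x).
Proof. by case: lA => d0 dl _ hx; rewrite -[_ *: _]addr0; apply: dl. Qed.
Lemma appZ (a : R[i]) x : dom A x -> app A (a *: x) = a *: app A x.
Proof. by case: lA => d0 _ al hx; rewrite -[_ *: x]addr0 al // app0 addr0. Qed.
Lemma domD x y : dom A x -> dom A y -> dom A (x + y).
Proof. by case: lA => _ dl _ hx hy; rewrite -[x]scale1r; apply: dl. Qed.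
Lemma appD x y : dom A x -> dom A y -> app A (x + y) = app A x + app A y.
Proof. by case: lA => _ _ al hx hy; rewrite -[x]scale1r al // !scale1r. Qed.
Lemma domB x y : dom A x -> dom A y -> dom A (x - y).
Proof. by move=> hx hy; rewrite -scaleN1r addrC; case: lA => _ dl _; apply: dl. Qed.
Lemma appB x y : dom A x -> dom A y -> app A (x - y) = app A x - app A y.
Proof.
move=> hx hy; have hNy : dom A (- y) by rewrite -scaleN1r; apply: domZ.
by rewrite appD // -scaleN1r appZ // scaleN1r.
Qed.

End LinearOp.

Section Graph.
Variable R : realType.
Variables (V1 V2 : lmodType R[i]) (ip1 : V1 -> V1 -> R[i]) (ip2 : V2 -> V2 -> R[i]).
Hypothesis H1 : is_inner_product ip1.
Hypothesis H2 : is_inner_product ip2.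
Local Notation ips := (ipsum ip1 ip2).

Lemma graph_subspace (A : op V1 V2) : linear_op A -> subspace (graph A).
Proof.
move=> lA; split.
  by exists 0; rewrite (app0 lA); split => //; case: lA.
move=> a _ _ [x [hx ->]] [y [hy ->]]; case: (lA) => _ dl al.
by exists (a *: x + y); split; [exact: dl|rewrite al].
Qed.

Lemma graph_closed (A : op V1 V2) : closed_op ip1 ip2 A -> seq_closed ips (graph A).
Proof.
move=> cA u l hu hl.
have /choice[f hf] n : exists x, dom A x /\ u n = (app A x, x) by case: (hu n) => x; exists x.
have cf : converges_to ip1 f l.2.
  by apply: (cvg_ext _ (cvg_snd H1 H2 hl)) => n; case: (hf n) => _ ->.
have cAf : converges_to ip2 (app A \o f) l.1.
  by apply: (cvg_ext _ (cvg_fst H1 H2 hl)) => n; case: (hf n) => _ ->.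
have [hd ha] := cA f l.2 l.1 (fun n => proj1 (hf n)) cf cAf.
by exists l.2; split => //; rewrite ha; case: l {hl cf cAf hd ha}.
Qed.

Hypothesis C1 : forall u, cauchy_seq ip1 u -> exists l, converges_to ip1 u l.
Hypothesis C2 : forall u, cauchy_seq ip2 u -> exists l, converges_to ip2 u l.

Lemma gap_le (A B : op V1 V2) (c : R) : 0 <= c ->
  linear_op A -> closed_op ip1 ip2 A -> linear_op B -> closed_op ip1 ip2 B ->
  (forall u, graph A u -> exists2 v, graph B v & ipnorm ips (u - v) <= c * ipnorm ips u) ->
  (forall u, graph B u -> exists2 v, graph A v & ipnorm ips (u - v) <= c * ipnorm ips u) ->
  gap ip1 ip2 A B <= 2 * c.
Proof.
move=> c0 lA cA lB cB hAB hBA.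
have Hs := ipsum_inner_product H1 H2.
have Cs := ipsum_complete H1 H2 C1 C2.
have sA := graph_subspace lA; have sB := graph_subspace lB.
have pA := orth_proj_spec Hs sA Cs (graph_closed cA).
have pB := orth_proj_spec Hs sB Cs (graph_closed cB).
apply: ge_sup => [|_ [z [hz ->]]].
  by exists (ipnorm ips (orth_proj ips (graph A) 0 - orth_proj ips (graph B) 0)), 0; rewrite (ipnorm0 Hs).
apply: le_trans (ipnorm_orth_proj_sub_le Hs sA sB pA pB c0 hAB hBA z) _.
by rewrite ler_piMr // mulr_ge0.
Qed.

End Graph.

Definition perturb (R : realType) (V1 V2 : lmodType R[i]) (ip1 : V1 -> V1 -> R[i])
  (A : op V1 V2) (x0 : V1) (v : V2) : op V1 V2 :=
  Op (dom A) (fun x => app A x + ip1 x x0 *: v).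

Section Perturbation.
Variable R : realType.
Variables (V1 V2 : lmodType R[i]) (ip1 : V1 -> V1 -> R[i]) (ip2 : V2 -> V2 -> R[i]).
Hypothesis H1 : is_inner_product ip1.
Hypothesis H2 : is_inner_product ip2.
Local Notation nr1 := (ipnorm ip1).
Local Notation nr2 := (ipnorm ip2).
Variables (A : op V1 V2) (x0 : V1) (v : V2).
Local Notation B := (perturb ip1 A x0 v).

Lemma ipnorm_rank_one_le x : nr2 (ip1 x x0 *: v) <= nr1 x * (nr1 x0 * nr2 v).
Proof. by rewrite (ipnormZ H2) mulrA ler_wpM2r ?ipnorm_ge0 ?(modulus_ip_le H1). Qed.

Lemma perturb_linear : linear_op A -> linear_op B.
Proof.
case=> d0 dl al; split => // a x y hx hy /=.
by rewrite al // (ipDZl H1) scalerDl -scalerA scalerDr addrACA.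
Qed.

Lemma perturb_densely_defined : densely_defined ip1 A -> densely_defined ip1 B.
Proof. by case=> lA dA; split; [exact: perturb_linear|exact: dA]. Qed.

Lemma perturb_closed : closed_op ip1 ip2 A -> closed_op ip1 ip2 B.
Proof.
move=> cA u x y hu cu cBu; pose K := nr1 x0 * nr2 v.
have K0 : 0 <= K by rewrite mulr_ge0 ?ipnorm_ge0.
have cF : converges_to ip2 (fun n => ip1 (u n) x0 *: v) (ip1 x x0 *: v).
  move=> e e0; have K1 : 0 < K + 1 by lra.
  have [N hN] := cu (e / (K + 1)) (divr_gt0 e0 K1).
  exists N => n /hN hn; rewrite -scalerBl -(ipBl H1).
  apply: le_lt_trans (ipnorm_rank_one_le _) _.
  apply: le_lt_trans (_ : _ <= e / (K + 1) * K) _; first by rewrite ler_wpM2r // ltW.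
  by rewrite mulrAC ltr_pdivrMr // mulrDr mulr1; lra.
have cAu : converges_to ip2 (app A \o u) (y - ip1 x x0 *: v).
  by apply: (cvg_ext _ (cvgB H2 cBu cF)) => n /=; rewrite addrK.
have [hx hAx] := cA u x _ hu cu cAu.
by split => //=; rewrite hAx subrK.
Qed.

Hypothesis C1 : forall u, cauchy_seq ip1 u -> exists l, converges_to ip1 u l.
Hypothesis C2 : forall u, cauchy_seq ip2 u -> exists l, converges_to ip2 u l.

(* Pairing [(A x, x)] with [(B x, x)] moves each graph vector by
   [|<x, x0> v| <= |x0| |v| |(A x, x)|]. *)
Lemma perturb_gap_le : densely_defined ip1 A -> closed_op ip1 ip2 A ->
  gap ip1 ip2 A B <= 2 * (nr1 x0 * nr2 v).
Proof.
move=> [lA dA] cA; set K := nr1 x0 * nr2 v.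
have K0 : 0 <= K by rewrite mulr_ge0 ?ipnorm_ge0.
have pair_close (a b : V2) x : nr2 (a - b) <= nr1 x * K ->
    ipnorm (ipsum ip1 ip2) ((a, x) - (b, x)) <= K * ipnorm (ipsum ip1 ip2) (a, x).
  move=> hab; apply: le_trans (ipnorm_ipsum_le H1 H2 _) _.
  rewrite /= subrr (ipnorm0 H1) addr0; apply: le_trans hab _.
  by rewrite mulrC ler_wpM2l // (ipnorm_snd_le H1 H2 (a, x)).
apply: (gap_le H1 H2 C1 C2) => //; [exact: perturb_linear|exact: perturb_closed|..].
- move=> _ [x [hx ->]]; exists (app B x, x); first by exists x.
  by apply: pair_close; rewrite /= opprD addrA subrr sub0r (ipnormN H2) ipnorm_rank_one_le.
- move=> _ [x [hx ->]]; exists (app A x, x); first by exists x.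
  by apply: pair_close; rewrite /= addrAC subrr add0r ipnorm_rank_one_le.
Qed.

End Perturbation.

Section PerturbMinimum.
Variable R : realType.
Local Notation Re := (@complex.Re R).
Local Notation Im := (@complex.Im R).
Variables (V1 V2 : lmodType R[i]) (ip1 : V1 -> V1 -> R[i]) (ip2 : V2 -> V2 -> R[i]).
Hypothesis H1 : is_inner_product ip1.
Hypothesis H2 : is_inner_product ip2.
Local Notation nr1 := (ipnorm ip1).
Local Notation nr2 := (ipnorm ip2).
Variables (A : op V1 V2) (x0 : V1) (y0 : V2).
Hypothesis lA : linear_op A.
Hypothesis hx0 : dom A x0.
Hypothesis nx0 : nr1 x0 = 1.
Hypothesis y0_orth : forall x, dom A x -> ip1 x x0 = 0 -> ip2 y0 (app A x) = 0.
Hypothesis y0_le : forall x, dom A x -> nr2 y0 * nr1 x <= nr2 (app A x).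
Local Notation B := (perturb ip1 A x0 (y0 - app A x0)).

Lemma perturb_app_x0 : app B x0 = y0.
Proof. by rewrite /= ip_sqnorm // -(sqr_ipnorm H1) nx0 expr1n scale1r addrC subrK. Qed.

(* With [x = a x0 + x'] and [x' _|_ x0], [B x = A x' + a y0] is an orthogonal
   sum, so [|B x|^2 >= |y0|^2 (|x'|^2 + |a|^2) = |y0|^2 |x|^2]. *)
Lemma perturb_app_ge x : dom A x -> nr1 x = 1 -> nr2 y0 <= nr2 (app B x).
Proof.
move=> hx nx; set a := ip1 x x0; set x' := x - a *: x0.
have hx' : dom A x' by apply: (domB lA) => //; apply: (domZ lA).
have x0x0 : ip1 x0 x0 = 1 by rewrite ip_sqnorm // -(sqr_ipnorm H1) nx0 expr1n.
have o' : ip1 x' x0 = 0 by rewrite /x' (ipBl H1) (ipZl H1) x0x0 mulr1 subrr.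
have ex : x = a *: x0 + x' by rewrite /x' addrC subrK.
have Bx : app B x = app A x' + a *: y0.
  have hax0 : dom A (a *: x0) by apply: (domZ lA).
  rewrite /= {1}ex (appD lA) // (appZ lA) // scalerBr.
  by rewrite -/a [a *: _ + _]addrC -addrA subrKC.
have sqBx : sqnorm ip2 (app B x) = sqnorm ip2 (app A x') + (Re a ^+ 2 + Im a ^+ 2) * sqnorm ip2 y0.
  by rewrite Bx (sqnormD H2) (ipZr H2) (ipC H2) y0_orth // conjc0 mulr0 mulr0 addr0 (sqnormZ H2).
have sqx : 1 = (Re a ^+ 2 + Im a ^+ 2) + sqnorm ip1 x'.
  rewrite -(expr1n _ 2) -nx (sqr_ipnorm H1) {1}ex (sqnormD H1) (ipZl H1) (ipC H1) o'.
  by rewrite conjc0 mulr0 mulr0 addr0 (sqnormZ H1) -(sqr_ipnorm H1 x0) nx0 expr1n mulr1.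
have sqAx' : sqnorm ip2 y0 * sqnorm ip1 x' <= sqnorm ip2 (app A x').
  rewrite -!(sqr_ipnorm H2) -(sqr_ipnorm H1) -exprMn.
  by rewrite ler_sqr ?nnegrE ?mulr_ge0 ?ipnorm_ge0 // y0_le.
apply: le_of_sqr_le; rewrite ?ipnorm_ge0 // !sqr_ipnorm // sqBx.
have := sqnorm_ge0 H2 y0; nra.
Qed.

Lemma perturb_minimum_attaining : minimum_attaining ip1 ip2 B.
Proof.
exists x0; split => //; split => //; rewrite perturb_app_x0.
have lb : lbound [set r | exists x, dom B x /\ nr1 x = 1 /\ r = nr2 (app B x)] (nr2 y0).
  by move=> _ [x [hx [nx ->]]]; apply: perturb_app_ge.
have Sy0 : [set r | exists x, dom B x /\ nr1 x = 1 /\ r = nr2 (app B x)] (nr2 y0).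
  by exists x0; rewrite perturb_app_x0.
apply/eqP; rewrite eq_le; apply/andP; split; first by apply: lb_le_inf => //; exists (nr2 y0).
exact: (ge_inf (ex_intro _ _ lb)).
Qed.

End PerturbMinimum.

(* [x0] is a unit vector of [D(A)] and [y0] a target value for [B x0] that
   makes the perturbation [B] of [A] minimum attaining at [x0]. *)
Definition admissible_pair (R : realType) (V1 V2 : lmodType R[i])
    (ip1 : V1 -> V1 -> R[i]) (ip2 : V2 -> V2 -> R[i]) (A : op V1 V2) (x0 : V1) (y0 : V2) :=
  [/\ dom A x0, ipnorm ip1 x0 = 1,
      forall x, dom A x -> ip1 x x0 = 0 -> ip2 y0 (app A x) = 0 &
      forall x, dom A x -> ipnorm ip2 y0 * ipnorm ip1 x <= ipnorm ip2 (app A x)].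

Lemma perturb_approx (R : realType) (V1 V2 : lmodType R[i])
    (ip1 : V1 -> V1 -> R[i]) (ip2 : V2 -> V2 -> R[i]) (A : op V1 V2) (x0 : V1) (y0 : V2) :
  is_hilbert ip1 -> is_hilbert ip2 -> densely_defined ip1 A -> closed_op ip1 ip2 A ->
  admissible_pair ip1 ip2 A x0 y0 ->
  exists B : op V1 V2,
    [/\ densely_defined ip1 B, closed_op ip1 ip2 B, minimum_attaining ip1 ip2 B
      & gap ip1 ip2 A B <= 2 * ipnorm ip2 (y0 - app A x0)].
Proof.
move=> [Hi1 C1 _] [Hi2 C2 _] hA cA [hx0 nx0 y0_orth y0_le].
exists (perturb ip1 A x0 (y0 - app A x0)); split.
- exact: perturb_densely_defined.
- exact: perturb_closed.
- by apply: perturb_minimum_attaining => //; case: hA.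
- by have := perturb_gap_le Hi1 Hi2 x0 (y0 - app A x0) C1 C2 hA cA; rewrite nx0 mul1r.
Qed.

Section MinModulus.
Variable R : realType.
Variables (V1 V2 : lmodType R[i]) (ip1 : V1 -> V1 -> R[i]) (ip2 : V2 -> V2 -> R[i]).
Hypothesis H1 : is_inner_product ip1.
Hypothesis H2 : is_inner_product ip2.
Local Notation nr1 := (ipnorm ip1).
Local Notation nr2 := (ipnorm ip2).
Variable A : op V1 V2.
Hypothesis lA : linear_op A.
Local Notation m := (min_modulus ip1 ip2 A).

Lemma exists_unit_dom : infinite_dimensional ip1 -> densely_defined ip1 A ->
  exists2 u, dom A u & nr1 u = 1.
Proof.
move=> /(_ 1%N)[e he] [_ dA].
have ne : nr1 (e 0%N) = 1 by rewrite /ipnorm he // sqrtr1.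
have [d [hd hdn]] := dA (e 0%N) (1 / 2) (divr_gt0 ltr01 (ltr0Sn _ 1)).
have nd : 0 < nr1 d by have := ipnormB_tri H1 (e 0%N) d 0; rewrite !subr0 ne; lra.
exists ((nr1 d)^-1%:C *: d); first exact: domZ.
by rewrite (ipnormZ_real H1) ?invr_ge0 ?ltW // mulVf // gt_eqF.
Qed.

Hypothesis unit_dom : exists2 u, dom A u & nr1 u = 1.

Let unit_image_norms := [set r | exists x, dom A x /\ nr1 x = 1 /\ r = nr2 (app A x)].

Let has_inf_unit_image_norms : has_inf unit_image_norms.
Proof.
have [u hu nu] := unit_dom.
by split; [exists (nr2 (app A u)), u|exists 0 => _ [x [_ [_ ->]]]; exact: ipnorm_ge0].
Qed.

Lemma min_modulus_ge0 : 0 <= m.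
Proof. by apply: lb_le_inf; [case: has_inf_unit_image_norms|move=> _ [x [_ [_ ->]]]; exact: ipnorm_ge0]. Qed.

Lemma min_modulus_le x : dom A x -> m * nr1 x <= nr2 (app A x).
Proof.
move=> hx; have [->|nx0] := eqVneq (nr1 x) 0; first by rewrite mulr0 ipnorm_ge0.
have nx : 0 < nr1 x by rewrite lt_def nx0 ipnorm_ge0.
have t0 : 0 <= (nr1 x)^-1 by rewrite invr_ge0 ltW.
have : m <= nr2 (app A ((nr1 x)^-1%:C *: x)).
  apply: (ge_inf (proj2 has_inf_unit_image_norms)); exists ((nr1 x)^-1%:C *: x); split; first exact: domZ.
  by rewrite (ipnormZ_real H1) // mulVf.
rewrite (appZ lA) // (ipnormZ_real H2) // => h.
by rewrite -ler_pdivlMr // mulrC.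
Qed.

Lemma min_modulus_approx d : 0 < d ->
  exists x0, [/\ dom A x0, nr1 x0 = 1 & nr2 (app A x0) < m + d].
Proof. by move=> d0; have [_ [x [hx [nx ->]]] ?] := inf_adherent d0 has_inf_unit_image_norms; exists x. Qed.

End MinModulus.

Definition range_orth (R : realType) (V1 V2 : lmodType R[i]) (ip1 : V1 -> V1 -> R[i])
  (A : op V1 V2) (x0 : V1) : set V2 :=
  [set y | exists x, dom A x /\ ip1 x x0 = 0 /\ y = app A x].

Section RangeOrth.
Variable R : realType.
Local Notation Re := (@complex.Re R).
Variables (V1 V2 : lmodType R[i]) (ip1 : V1 -> V1 -> R[i]) (ip2 : V2 -> V2 -> R[i]).
Hypothesis H1 : is_inner_product ip1.
Hypothesis H2 : is_inner_product ip2.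
Local Notation nr1 := (ipnorm ip1).
Local Notation nr2 := (ipnorm ip2).
Variables (A : op V1 V2) (x0 : V1) (m : R).
Hypothesis lA : linear_op A.
Hypothesis hm : forall x, dom A x -> m * nr1 x <= nr2 (app A x).
Local Notation W := (range_orth ip1 A x0).

Lemma range_orth_subspace : subspace W.
Proof.
split; first by exists 0; rewrite (ip0l H1) (app0 lA); split => //; case: lA.
move=> a _ _ [x [hx [ox ->]]] [y [hy [oy ->]]].
have hax : dom A (a *: x) by apply: (domZ lA).
exists (a *: x + y); split; first exact: (domD lA).
by rewrite (ipDZl H1) ox oy mulr0 addr0 (appD lA) // (appZ lA).
Qed.

Lemma range_orth_closed : 0 < m -> closed_op ip1 ip2 A ->
  (forall u, cauchy_seq ip1 u -> exists l, converges_to ip1 u l) -> seq_closed ip2 W.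
Proof.
move=> m_pos cA C1 u y hu cu.
have /choice[f hf] n : exists x, dom A x /\ ip1 x x0 = 0 /\ u n = app A x by case: (hu n) => x; exists x.
have cf : cauchy_seq ip1 f.
  move=> e e0; have [N hN] := cvg_cauchy H2 cu (mulr_gt0 e0 m_pos).
  exists N => i j hi hj; have [hfi [_ ei]] := hf i; have [hfj [_ ej]] := hf j.
  have := hN _ _ hi hj; rewrite ei ej -(appB lA) // => h.
  rewrite -(ltr_pM2l m_pos); rewrite mulrC in h.
  exact: le_lt_trans (hm (domB lA hfi hfj)) h.
have [x hx] := C1 _ cf.
have cAf : converges_to ip2 (app A \o f) y.
  by apply: (cvg_ext _ cu) => n /=; case: (hf n) => _ [_ ->].
have [dx Ax] := cA _ _ _ (fun n => proj1 (hf n)) hx cAf.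
exists x; split => //; split => //.
by apply: (cvg_ip_eq0 H1 hx) => n; case: (hf n) => _ [].
Qed.

Hypothesis m0 : 0 <= m.
Hypothesis hx0 : dom A x0.
Hypothesis nx0 : nr1 x0 = 1.
Variable P : V2 -> V2.
Hypothesis hP : is_orth_proj ip2 W P.

(* [P (A x0) = A x'] with [x' _|_ x0]; the lower bound [m |x| <= |A x|] along
   [x0 + t x'] is a nonnegative quadratic in [t], and its discriminant bounds
   [b := |P (A x0)|^2] by [(|A x0|^2 - m^2) b]. *)
Lemma sqnorm_proj_range_orth_le :
  sqnorm ip2 (P (app A x0)) <= nr2 (app A x0) ^+ 2 - m ^+ 2.
Proof.
have [x' [hx' [o' eP]]] := orth_proj_in hP (app A x0).
set a := nr2 (app A x0); set b := sqnorm ip2 (P (app A x0)).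
have hm2 x : dom A x -> m ^+ 2 * sqnorm ip1 x <= sqnorm ip2 (app A x).
  move=> hx; rewrite -(sqr_ipnorm H1) -(sqr_ipnorm H2) -exprMn.
  by rewrite ler_sqr ?nnegrE ?mulr_ge0 ?ipnorm_ge0 // hm.
have Ax'2 : sqnorm ip2 (app A x') = b by rewrite /b eP.
have ReAx0Ax' : Re (ip2 (app A x0) (app A x')) = b by rewrite -eP /b (sqnorm_orth_proj H2 hP).
have Rex0x' : Re (ip1 x0 x') = 0 by rewrite (Re_ipC H1) o'.
have hc : 0 <= b - m ^+ 2 * sqnorm ip1 x' by rewrite subr_ge0 -Ax'2 hm2.
have am : 0 <= a ^+ 2 - m ^+ 2.
  by rewrite subr_ge0 ler_sqr ?nnegrE ?ipnorm_ge0 // -[m]mulr1 -nx0 hm.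
have q (t : R) : 0 <= (a ^+ 2 - m ^+ 2) + 2 * t * b + t ^+ 2 * (b - m ^+ 2 * sqnorm ip1 x').
  have hxt : dom A (t%:C *: x') by apply: (domZ lA).
  have := hm2 _ (domD lA hx0 hxt).
  rewrite (appD lA) // (appZ lA) // (sqnormD H1) (sqnormD H2) (sqnormZ_real H1).
  rewrite (sqnormZ_real H2) (Re_ipZr_real H1) (Re_ipZr_real H2) Rex0x' ReAx0Ax' Ax'2.
  by rewrite -(sqr_ipnorm H1) nx0 -(sqr_ipnorm H2) -/a; nra.
have hd := quadratic_ge0_discr hc q.
have [->|bn0] := eqVneq b 0; first exact: am.
have bp : 0 < b by rewrite lt_def bn0 sqnorm_ge0.
rewrite -(ler_pM2l bp); apply: le_trans hd _; rewrite [b * _]mulrC ler_wpM2l //.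
by rewrite gerBl mulr_ge0 ?sqr_ge0 ?sqnorm_ge0.
Qed.

End RangeOrth.

Section AdmissiblePairs.
Variable R : realType.
Variables (V1 V2 : lmodType R[i]) (ip1 : V1 -> V1 -> R[i]) (ip2 : V2 -> V2 -> R[i]).
Hypothesis H1 : is_inner_product ip1.
Hypothesis H2 : is_inner_product ip2.
Local Notation nr1 := (ipnorm ip1).
Local Notation nr2 := (ipnorm ip2).
Variable A : op V1 V2.
Hypothesis lA : linear_op A.
Hypothesis unit_dom : exists2 u, dom A u & nr1 u = 1.
Local Notation m := (min_modulus ip1 ip2 A).
Variables (eps : R).

Lemma admissible_pair_zero : m < eps ->
  exists x0, admissible_pair ip1 ip2 A x0 0 /\ nr2 (0 - app A x0) < eps.
Proof.
rewrite -subr_gt0 => /(min_modulus_approx ip2 unit_dom)[x0 [hx0 nx0 near]].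
exists x0; split; last by rewrite sub0r (ipnormN H2) -(subrKC m eps).
by split => // x hx; rewrite ?(ip0l H2) ?(ipnorm0 H2) ?mul0r ?ipnorm_ge0.
Qed.

Hypothesis cA : closed_op ip1 ip2 A.
Hypothesis C1 : forall u, cauchy_seq ip1 u -> exists l, converges_to ip1 u l.
Hypothesis C2 : forall u, cauchy_seq ip2 u -> exists l, converges_to ip2 u l.

Lemma admissible_pair_pos : 0 < m -> 0 < eps ->
  exists x0 y0, admissible_pair ip1 ip2 A x0 y0 /\ nr2 (y0 - app A x0) < eps.
Proof.
move=> m_pos eps0; pose e := eps / 2.
have e0 : 0 < e by rewrite divr_gt0.
pose d := Num.min e (e ^+ 2 / (2 * m + e)).
have d0 : 0 < d by rewrite lt_min e0 divr_gt0 ?exprn_gt0 //; lra.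
have d_le : d <= e by rewrite ge_min lexx.
have [x0 [hx0 nx0 near]] := min_modulus_approx ip2 unit_dom d0.
have hm := min_modulus_le H1 H2 lA unit_dom.
set a := nr2 (app A x0) in near.
have ma : m <= a by have := hm _ hx0; rewrite nx0 mulr1.
have a_pos : 0 < a by apply: lt_le_trans ma.
have [P hP] : exists P, is_orth_proj ip2 (range_orth ip1 A x0) P.
  exists (orth_proj ip2 (range_orth ip1 A x0)).
  exact: (orth_proj_spec H2 (range_orth_subspace H1 x0 lA) C2
           (range_orth_closed H1 H2 lA hm m_pos cA C1)).
pose s := m / a.
have s0 : 0 <= s by rewrite divr_ge0 // ltW.
have s1 : s <= 1 by rewrite ler_pdivrMr // mul1r.
have sa : s * a = m by rewrite divfK // gt_eqF.
exists x0, (s%:C *: (app A x0 - P (app A x0))); split; first split => //.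
- move=> x hx ox; rewrite (ipZl H2) (orth_proj_orth hP) ?mulr0 //.
  by exists x.
- move=> x hx; apply: le_trans (hm _ hx); rewrite ler_wpM2r ?ipnorm_ge0 //.
  rewrite (ipnormZ_real H2) // -sa ler_wpM2l //.
  exact: (ipnorm_orth_proj_compl_le H2 hP).
have nP : nr2 (P (app A x0)) < e.
  apply: lt_of_sqr_lt; rewrite ?ipnorm_ge0 ?ltW // sqr_ipnorm //.
  apply: le_lt_trans (sqnorm_proj_range_orth_le H1 H2 lA hm (min_modulus_ge0 ip2 unit_dom) hx0 nx0 hP) _.
  rewrite -/a; apply: sqr_sub_sqr_lt (ltW m_pos) ma near d_le _.
  by rewrite -ler_pdivlMr ?ge_min ?lexx ?orbT //; lra.
apply: le_lt_trans (ipnorm_scale_sub_le H2 _ _ s0 s1) _; rewrite -/a.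
have : (1 - s) * a = a - m by rewrite mulrBl mul1r sa.
have : e + e = eps by rewrite /e -splitr.
lra.
Qed.

End AdmissiblePairs.

Theorem corollary3p6 (R : realType) (V1 V2 : lmodType R[i])
  (ip1 : V1 -> V1 -> R[i]) (ip2 : V2 -> V2 -> R[i])
  (H1 : is_hilbert ip1) (H2 : is_hilbert ip2)
  (A : op V1 V2) (hA : densely_defined ip1 A) (cA : closed_op ip1 ip2 A)
  (eps : R) (heps : 0 < eps) :
  exists B : op V1 V2,
    [/\ densely_defined ip1 B, closed_op ip1 ip2 B, minimum_attaining ip1 ip2 B
      & gap ip1 ip2 A B < eps].
Proof.
have [Hi1 C1 I1] := H1; have [Hi2 C2 _] := H2; have [lA _] := hA.
have unit_dom := exists_unit_dom Hi1 lA I1 hA.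
have eps2 : 0 < eps / 2 by rewrite divr_gt0.
have [x0 [y0 [adm near]]] : exists x0 y0,
    admissible_pair ip1 ip2 A x0 y0 /\ ipnorm ip2 (y0 - app A x0) < eps / 2.
  have [m_pos|m_le0] := ltrP 0 (min_modulus ip1 ip2 A).
    exact: (admissible_pair_pos Hi1 Hi2 lA unit_dom cA C1 C2 m_pos eps2).
  have [|x0 ?] := admissible_pair_zero Hi2 unit_dom (eps := eps / 2); last by exists x0, 0.
  exact: le_lt_trans m_le0 eps2.
have [B [dB cB mB gB]] := perturb_approx H1 H2 hA cA adm.
by exists B; split => //; lra.
Qed.
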